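(* Let $X\subset\mathcal A^{\mathbb Z}$ be a shift of finite type given by a $0$-$1$ adjacency matrix $M$ indexed by the finite alphabet $\mathcal A$ (so $X=\{x:M_{x_ix_{i+1}}=1\ \forall i\}$), and suppose $M^2>0$ (all entries positive). Let $c_S^n=2^{-n}$ for all $S$. Then $$\operatorname{Asc}(X,\mathscr U_0,\sigma)=\frac14\sum_{k=1}^\infty\frac{\log|\mathscr L_{k}(X)|}{2^k}.$$
   Context: $\sigma$ is the shift. $\mathscr U_0$ is the open cover (partition) of $X$ by rank-0 cylinders $\{x\in X:x_0=a\}$, $a\in\mathcal A$. $\mathscr L_k(X)$ is the set of words of length $k$ occurring in points of $X$. For $S\subset n^*=\{0,\dots,n-1\}$, $\mathscr U_S=\bigvee_{i\in S}\sigma^{-i}\mathscr U$ and $N(\cdot)$ is the minimal cardinality of a subcover; $\operatorname{Asc}(X,\mathscr U,\sigma)=\lim_{n\to\infty}\frac1n\sum_{S\subset n^*}c_S^n\log N(\mathscr U_S)$. *)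

From HB Require Import structures.
From mathcomp Require Import all_boot all_order all_algebra.
From mathcomp Require Import all_classical all_reals all_analysis.
Set Implicit Arguments. Unset Strict Implicit. Unset Printing Implicit Defensive.
Import Order.TTheory GRing.Theory Num.Theory numFieldNormedType.Exports.
Local Open Scope classical_set_scope.
Local Open Scope ring_scope.

Definition SFT (m : nat) (M : 'M[nat]_m) : set (int -> 'I_m) :=
  [set x | forall i : int, M (x i) (x (i + 1)) = 1%N].

Definition lang (m : nat) (M : 'M[nat]_m) (k : nat) : {set k.-tuple 'I_m} :=
  [set w : k.-tuple 'I_m | `[< exists2 x, SFT M x &
       exists j : int, forall i : 'I_k, x (j + (i : nat)%:Z) = tnth w i >] ].

(** N(U): minimal cardinality of a subfamily of the family U (indexed by a
    finite type I) covering Y.  (Defaults to #|I| if no subfamily covers Y,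
    which never happens for the covers considered below.) *)
Definition Ncov (T : Type) (I : finType) (U : I -> set T) (Y : set T) : nat :=
  \big[minn/#|I|]_(F : {set I} |
      `[< forall y, Y y -> exists2 i, i \in F & U i y >]) #|F|.

(** The elements of U_S = \/_{i in S} sigma^{-i} U_0 (as a cover of X):
    for each pattern p on {0..n-1}, the set {x in X : x_i = p_i, i in S}. *)
Definition joinU (m : nat) (M : 'M[nat]_m) (n : nat) (S : {set 'I_n})
    (p : {ffun 'I_n -> 'I_m}) : set (int -> 'I_m) :=
  [set x | SFT M x /\ forall i : 'I_n, i \in S -> x (i : nat)%:Z = p i].

Definition N_US (m : nat) (M : 'M[nat]_m) (n : nat) (S : {set 'I_n}) : nat :=
  Ncov (joinU M S) (SFT M).

Definition asc_term (R : realType) (m : nat) (M : 'M[nat]_m) (n : nat) : R :=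
  n%:R^-1 * \sum_(S : {set 'I_n}) (2 ^- n) * ln (N_US M S)%:R.

Definition rhs_term (R : realType) (m : nat) (M : 'M[nat]_m) (k : nat) : R :=
  ln (#|lang M k|)%:R / 2 ^+ k.

(* Since M^2 > 0, two points of X can be glued across one free coordinate, so a
   pattern on S occurs in X iff its restriction to each maximal run of S is a word
   of X: N(U_S) is the product of |L_len(X)| over the runs of S.  With
   l_k = log |L_k(X)| and r_i the length of the run of S ending at i, this
   telescopes to log N(U_S) = sum_(i < n) (l_(r_i) - l_(r_i - 1)).  Averaging over
   S, where r_i > j with probability 2^-(j+1), turns the n-th term into the Cesaro
   mean of a_i = sum_(j <= i) (l_(j+1) - 2 l_j + l_(j-1)) / 2^(j+1)
   = l_(i+1) / 2^(i+1) + 1/4 sum_(k < i) l_k / 2^k, which tends to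
   1/4 sum_k l_k / 2^k. *)

From HB Require Import structures.
From mathcomp Require Import all_boot all_order all_algebra.
From mathcomp Require Import all_classical all_reals all_analysis.
From mathcomp Require Import zify ring lra.
Import Order.TTheory GRing.Theory Num.Theory numFieldNormedType.Exports.
Local Open Scope classical_set_scope.
Set Implicit Arguments. Unset Strict Implicit. Unset Printing Implicit Defensive.

Lemma card_supsets (T : finType) (A : {set T}) :
  #|[set S : {set T} | A \subset S]%SET| = (2 ^ (#|T| - #|A|))%N.
Proof.
rewrite -(cardsC A) addKn -card_powerset.
have -> : [set S : {set T} | A \subset S]%SET = (fun U => U :|: A) @: powerset (~: A).
  apply/finset.setP => S; rewrite inE; apply/idP/imsetP => [AS|[U _ ->]].
    exists (S :\: A); first by rewrite powersetE finset.subsetDr.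
    by rewrite finset.setUC finset.setDE finset.setUIr finset.setUCr finset.setIT;
      apply/esym/finset.setUidPr.
  exact: finset.subsetUr.
apply: card_in_imset => U V; rewrite !powersetE => hU hV e.
have UA_C (W : {set T}) : W \subset ~: A -> (W :|: A) :&: ~: A = W.
  by move=> h; rewrite finset.setIUl finset.setICr finset.setU0; apply/finset.setIidPl.
by rewrite -(UA_C U hU) -(UA_C V hV) e.
Qed.

Fixpoint runlen (s : nat -> bool) (i : nat) : nat :=
  if i is i'.+1 then (if s i then (runlen s i').+1 else 0) else nat_of_bool (s 0).

Lemma runlen_le s i : runlen s i <= i.+1.
Proof. by elim: i => [|i IH] /=; [case: (s 0) | case: (s i.+1)]. Qed.

Lemma ltn_runlen s i j :
  j <= i -> (j < runlen s i) = [forall l : 'I_j.+1, s (i - l)].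
Proof.
elim: i j => [|i IH] [|j] //= ji.
- by rewrite lt0b; apply/idP/forallP => [s0 l|/(_ ord0)]; rewrite sub0n.
- case: (boolP (s i.+1)) => h /=.
    by apply/esym/forallP => l; rewrite (ord1 l) subn0.
  by apply/esym/negbTE/negP => /forallP /(_ ord0); rewrite subn0 (negbTE h).
case: (boolP (s i.+1)) => h /=; last first.
  by apply/esym/negbTE/negP => /forallP /(_ ord0); rewrite subn0 (negbTE h).
rewrite ltnS IH //; apply/forallP/forallP => H [l lj]; last first.
  by have := H (Ordinal (lj : l.+1 < j.+2)); rewrite /= subSS.
case: l lj => [|l] lj; first by rewrite subn0.
by have := H (Ordinal (lj : l < j.+1)); rewrite /= subSS.
Qed.

Lemma runlen_gt0 s i : (0 < runlen s i) = s i.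
Proof.
rewrite ltn_runlen //; apply/forallP/idP => [/(_ ord0)|si l]; first by rewrite subn0.
by rewrite (ord1 l) subn0.
Qed.

Lemma runlen_mem s i l : l < runlen s i -> s (i - l).
Proof.
move=> h; have li : l <= i by have := runlen_le s i; lia.
by move: h; rewrite ltn_runlen // => /forallP /(_ (Ordinal (ltnSn l))).
Qed.

Lemma runlen_stop s i : runlen s i <= i -> ~~ s (i - runlen s i).
Proof. by elim: i => [|i IH] /=; [case: (s 0) | case: (boolP (s i.+1))]. Qed.

Definition memn n (S : {set 'I_n}) (i : nat) : bool := [exists j in S, val j == i].

Lemma memnE n (S : {set 'I_n}) (i : 'I_n) : memn S i = (i \in S).
Proof.
apply/existsP/idP => [[j /andP[jS /eqP/val_inj <-]] //|iS].
by exists i; rewrite iS eqxx.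
Qed.

Definition ival n (u k : nat) : {set 'I_n} := [set i : 'I_n | u <= i < u + k].

Lemma card_ival n u k : u + k <= n -> #|ival n u k| = k.
Proof.
elim: k => [|k IH] ukn.
  by apply/eqP; rewrite cards_eq0; apply/eqP/finset.setP => i; rewrite !inE addn0; lia.
have ukn' : u + k < n by lia.
have -> : ival n u k.+1 = Ordinal ukn' |: ival n u k.
  by apply/finset.setP => i; rewrite !inE -val_eqE /=; lia.
by rewrite cardsU1 IH 1?inE /= ?ltnn ?andbF //; lia.
Qed.

Definition pre n (S : {set 'I_n}) (t : nat) : {set 'I_n} := [set i in S | i < t].

Lemma pre0 n (S : {set 'I_n}) : pre S 0 = finset.set0.
Proof. by apply/finset.setP => i; rewrite !inE ltn0 andbF. Qed.

Lemma pre_full n (S : {set 'I_n}) : pre S n = S.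
Proof. by apply/finset.setP => i; rewrite !inE ltn_ord andbT. Qed.

Lemma pre_addn n (S : {set 'I_n}) h k :
  (forall i, h <= i < h + k -> memn S i) -> pre S (h + k) = pre S h :|: ival n h k.
Proof.
move=> runS; apply/finset.setP => i; rewrite !inE.
case: (ltnP i h) => ih; first by rewrite andbT; have -> : i < h + k by lia.
rewrite andbF /=; case: (ltnP i (h + k)) => ihk; rewrite ?andbT ?andbF //.
by rewrite -memnE; apply: runS; rewrite ih.
Qed.

Lemma ltn_runlen_memn n (S : {set 'I_n}) i j : i < n -> j <= i ->
  (j < runlen (memn S) i) = (ival n (i - j) j.+1 \subset S).
Proof.
move=> ilt ji; rewrite ltn_runlen //; apply/forallP/fintype.subsetP => [runS o|ivS l].
  rewrite inE => /andP[io oi]; have lj : i - o < j.+1 by lia.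
  by have := runS (Ordinal lj); rewrite /= (_ : i - (i - o) = o) ?memnE //; lia.
have il : i - l < n by lia.
rewrite (_ : i - l = Ordinal il) // memnE; apply: ivS.
by rewrite inE /=; have := ltn_ord l; lia.
Qed.

Local Open Scope ring_scope.

Lemma odd_abs_addz1 (i : int) : odd `|i + 1| = ~~ odd `|i|.
Proof.
case: i => n /=; first by rewrite addn1.
by rewrite NegzE -addn1 PoszD opprD subrK abszN /= negbK.
Qed.

Lemma sum_n_div_2expn (R : realFieldType) n :
  \sum_(k < n) k%:R / 2 ^+ k = 2 - n.+1%:R * 2 / 2 ^+ n :> R.
Proof.
elim: n => [|n IH]; first by rewrite big_ord0 expr0; lra.
by rewrite big_ord_recr /= IH exprS -!natr1; field; rewrite expf_neq0.
Qed.

Lemma sum_from1_series (V : zmodType) (u : V ^nat) : u 0%N = 0 ->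
  (fun n => \sum_(1 <= k < n) u k) = series u.
Proof.
move=> u0; apply/funext => -[|n]; first by rewrite seriesEnat /= !big_geq.
by rewrite seriesEnat /= [RHS]big_ltn // u0 add0r.
Qed.

Section ShiftOfFiniteType.

Variables (m : nat) (M : 'M[nat]_m).

Lemma SFT_shift x (j : int) : SFT M x -> SFT M (fun i => x (i + j)).
Proof. by move=> Xx i; rewrite (addrAC i 1 j); apply: Xx. Qed.

Hypothesis M01 : forall a b : 'I_m, M a b = 0%N \/ M a b = 1%N.
Hypothesis M2pos : forall a b : 'I_m, (0 < (M *m M) a b)%N.

Lemma two_step_path a b : exists c, M a c = 1%N /\ M c b = 1%N.
Proof.
have [//|no_path] := pselect (exists c, M a c = 1%N /\ M c b = 1%N).
have := M2pos a b; rewrite mxE big1 // => c _.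
case: (M01 a c) => [->|ac]; first by rewrite mul0r.
case: (M01 c b) => [->|cb]; first by rewrite mulr0.
by case: no_path; exists c.
Qed.

Lemma SFT_nonempty (a : 'I_m) : exists x, SFT M x.
Proof.
have [c [ac ca]] := two_step_path a a.
exists (fun i : int => if odd `|i| then c else a) => i.
by rewrite odd_abs_addz1; case: (odd _).
Qed.

Lemma SFT_glue x1 x2 (g : int) : SFT M x1 -> SFT M x2 ->
  exists2 z, SFT M z & (forall t, t < g -> z t = x1 t) /\ (forall t, g < t -> z t = x2 t).
Proof.
move=> X1 X2; have [c [hc1 hc2]] := two_step_path (x1 (g - 1)) (x2 (g + 1)).
exists (fun t => if t < g then x1 t else if t == g then c else x2 t); last first.
  by split=> t tg; rewrite ?tg // ltNge ltW //= gt_eqF.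
move=> t; case: (ltrgtP (t + 1) g) => tg.
- by rewrite ifT; [apply: X1 | lia].
- case: (ltrgtP t g) => tg'; [lia | exact: X2 | by rewrite -hc2 tg'].
- by rewrite ifT; [have -> : t = g - 1 by lia | lia].
Qed.

Variable a0 : 'I_m.

Definition pad n (S : {set 'I_n}) (p : 'I_n -> 'I_m) : {ffun 'I_n -> 'I_m} :=
  [ffun i => if i \in S then p i else a0].

Definition padded n (S : {set 'I_n}) (p : {ffun 'I_n -> 'I_m}) : bool :=
  [forall i, (i \notin S) ==> (p i == a0)].

(* The elements of U_S meeting X, each encoded by its pattern on S extended by a0. *)
Definition patterns n (S : {set 'I_n}) : {set {ffun 'I_n -> 'I_m}} :=
  [set p | padded S p && `[< exists x, joinU M S p x >]].

Lemma pad_padded n (S : {set 'I_n}) p : padded S (pad S p).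
Proof. by apply/forallP => i; apply/implyP => /negbTE iS; rewrite ffunE iS. Qed.

Lemma padded_inj n (S : {set 'I_n}) p q :
  padded S p -> padded S q -> {in S, p =1 q} -> p = q.
Proof.
move=> /forallP pS /forallP qS eq_pq; apply/ffunP => i.
case: (boolP (i \in S)) => iS; first exact: eq_pq.
by rewrite (eqP (implyP (pS i) iS)) (eqP (implyP (qS i) iS)).
Qed.

Lemma pad_eq n (S : {set 'I_n}) p q :
  padded S q -> {in S, p =1 q} -> pad S p = q.
Proof.
move=> qS eq_pq; apply: padded_inj (pad_padded S p) qS _ => i iS.
by rewrite ffunE iS eq_pq.
Qed.

Lemma pad_in_patterns n (S : {set 'I_n}) x :
  SFT M x -> pad S (fun i => x (i : nat)%:Z) \in patterns S.
Proof.
move=> Xx; rewrite inE pad_padded; apply/asboolP; exists x; split=> // i iS.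
by rewrite ffunE iS.
Qed.

Lemma N_US_patterns n (S : {set 'I_n}) : N_US M S = #|patterns S|.
Proof.
apply/eqP; rewrite eqn_leq; apply/andP; split.
  apply: (bigmin_le_cond _ (fun F : {set _} => #|F|)); apply/asboolP => y Xy.
  exists (pad S (fun i => y (i : nat)%:Z)); first exact: pad_in_patterns.
  by split=> // i iS; rewrite ffunE iS.
apply: (le_bigmin (T := nat)) => [|F /asboolP cov]; first exact: max_card.
apply: leq_trans (leq_imset_card (fun p : {ffun 'I_n -> 'I_m} => pad S p) F).
apply/subset_leq_card/fintype.subsetP => p; rewrite inE => /andP[pS /asboolP[x [Xx xp]]].
have [q qF [_ xq]] := cov x Xx.
by apply/imsetP; exists q => //; apply/esym/(pad_eq pS) => i iS; rewrite -xp ?xq.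
Qed.

Lemma card_patternsU n (A B : {set 'I_n}) (g : nat) :
  (forall i, i \in A -> i < g)%N -> (forall i, i \in B -> g < i)%N ->
  #|patterns (A :|: B)| = (#|patterns A| * #|patterns B|)%N.
Proof.
move=> ltA gtB.
have AnB i : i \in B -> i \notin A.
  by move=> iB; apply/negP => iA; have := ltA i iA; have := gtB i iB; lia.
pose restr (p : {ffun 'I_n -> 'I_m}) := (pad A p, pad B p).
rewrite -cardsX -(card_in_imset (f := restr)); last first.
  move=> p q; rewrite !inE => /andP[pAB _] /andP[qAB _] [eA eB].
  apply: padded_inj pAB qAB _ => i; rewrite inE => /orP[iA|iB].
    by have := congr1 (fun f : {ffun _} => f i) eA; rewrite !ffunE iA.
  by have := congr1 (fun f : {ffun _} => f i) eB; rewrite !ffunE iB.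
apply: eq_card => -[p1 p2]; rewrite [in RHS]inE /=; apply/imsetP/idP.
  move=> [p]; rewrite inE => /andP[_ /asboolP[x [Xx xp]]] [-> ->].
  rewrite !inE !pad_padded /=; apply/andP; split; apply/asboolP; exists x; split=> //.
    by move=> i iA; rewrite ffunE iA xp // inE iA.
  by move=> i iB; rewrite ffunE iB xp // inE iB orbT.
rewrite !inE => /andP[/andP[p1A /asboolP[x1 [X1 x1p]]] /andP[p2B /asboolP[x2 [X2 x2p]]]].
have [z Xz [zx1 zx2]] := SFT_glue g%:Z X1 X2.
exists [ffun i => if i \in A then p1 i else p2 i]; last first.
  congr (_, _); apply/esym/pad_eq => // i iS;
    by rewrite ffunE ?iS // (negbTE (AnB i iS)).
rewrite inE; apply/andP; split.
  apply/forallP => i; apply/implyP; rewrite inE negb_or => /andP[iA iB].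
  by rewrite ffunE (negbTE iA); exact: (implyP (forallP p2B i) iB).
apply/asboolP; exists z; split=> // i; rewrite inE ffunE => /orP[iA|iB].
  by rewrite iA zx1 ?x1p //; have := ltA i iA; lia.
by rewrite (negbTE (AnB i iB)) zx2 ?x2p //; have := gtB i iB; lia.
Qed.

Lemma card_patterns_ival n (u k : nat) :
  (u + k <= n)%N -> #|patterns (ival n u k)| = #|lang M k|.
Proof.
move=> ukn.
pose word_pad (w : k.-tuple 'I_m) := pad (ival n u k) (fun i => nth a0 w (i - u)).
have word_pad_inj : injective word_pad.
  move=> w w' e; apply: val_inj; apply: (@eq_from_nth _ a0); first by rewrite !size_tuple.
  move=> j; rewrite size_tuple => jk; have ujn : (u + j < n)%N by lia.
  have := congr1 (fun f : {ffun _} => f (Ordinal ujn)) e.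
  by rewrite /word_pad !ffunE inE /= leq_addr ltn_add2l jk /= addKn.
rewrite -(card_imset _ word_pad_inj); apply: eq_card => p; apply/idP/imsetP.
  rewrite inE => /andP[pI /asboolP[x [Xx xp]]].
  exists [tuple x (u%:Z + (l : nat)%:Z) | l < k].
    by rewrite inE; apply/asboolP; exists x => //; exists u%:Z => i; rewrite tnth_mktuple.
  apply/esym/(pad_eq pI) => i iI; move: (iI); rewrite inE => /andP[ui iu].
  have ik : (i - u < k)%N by lia.
  rewrite -xp // (nth_mktuple _ _ (Ordinal ik)) /=; congr x; lia.
move=> [w]; rewrite inE => /asboolP[x Xx [j0 xw]] ->.
rewrite inE pad_padded; apply/asboolP.
exists (fun t => x (t + (j0 - u%:Z))); split; first exact: SFT_shift.
move=> i iI; rewrite ffunE iI; move: (iI); rewrite inE => /andP[ui iu].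
have ik : (i - u < k)%N by lia.
by have := xw (Ordinal ik); rewrite (tnth_nth a0) /= => <-; congr x; lia.
Qed.

Lemma card_patterns_gt0 n (S : {set 'I_n}) : (0 < #|patterns S|)%N.
Proof.
have [x Xx] := SFT_nonempty a0.
by apply/card_gt0P; exists (pad S (fun i => x (i : nat)%:Z)); exact: pad_in_patterns.
Qed.

Lemma card_lang_gt0 k : (0 < #|lang M k|)%N.
Proof. by rewrite -(@card_patterns_ival k 0) // card_patterns_gt0. Qed.

Lemma card_lang0 : #|lang M 0| = 1%N.
Proof.
apply/eqP; rewrite eqn_leq card_lang_gt0 andbT.
by apply: leq_trans (max_card _) _; rewrite card_tuple expn0.
Qed.

Lemma card_patterns_pre0 n (S : {set 'I_n}) : #|patterns (pre S 0)| = 1%N.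
Proof.
by rewrite pre0 -card_lang0 -(@card_patterns_ival n 0 0) //; congr #|patterns _|.
Qed.

Lemma card_patterns_preU n (S : {set 'I_n}) h k :
  (h + k <= n)%N -> (0 < h -> ~~ memn S h.-1)%N ->
  #|patterns (pre S h :|: ival n h k)| = (#|patterns (pre S h)| * #|lang M k|)%N.
Proof.
case: h => [|h] hkn gap.
  by rewrite card_patterns_pre0 mul1n pre0 finset.set0U card_patterns_ival.
rewrite (@card_patternsU _ _ _ h) ?card_patterns_ival // => i; rewrite inE.
  case/andP=> iS ih; rewrite ltn_neqAle -ltnS ih andbT.
  by apply: contraNneq (gap isT) => <-; rewrite memnE.
by case/andP => hi _; lia.
Qed.

Variable R : realType.

Definition logL k : R := ln (#|lang M k|%:R).

Definition dlogL j : R := logL j - logL j.-1.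

Lemma ln_card_patterns_pre n (S : {set 'I_n}) t : (t <= n)%N ->
  ln (#|patterns (pre S t)|%:R : R) = \sum_(i < t) dlogL (runlen (memn S) i).
Proof.
have card_gt0 (T : {set 'I_n}) : (#|patterns T|%:R : R) \is Num.pos.
  by rewrite posrE ltr0n card_patterns_gt0.
elim: t => [|t IH] tn; first by rewrite big_ord0 card_patterns_pre0 ln1.
rewrite big_ord_recr /= -IH; last lia.
have rle := runlen_le (memn S) t.
move er : (runlen (memn S) t) rle => r rle.
have [r0|r_gt0] := posnP r.
  have St : ~~ memn S t by rewrite -runlen_gt0 er r0.
  rewrite r0 /dlogL subrr addr0; congr (ln _%:R); congr #|patterns _|.
  apply/finset.setP => i; rewrite !inE ltnS leq_eqVlt.
  by case: eqP => //= it; rewrite -memnE it (negbTE St).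
move eh : (t.+1 - r)%N => h.
have runS i : (h <= i < h + r)%N -> memn S i.
  move=> hir; have -> : i = (t - (t - i))%N by lia.
  by apply: runlen_mem; rewrite er; lia.
have gap : (0 < h)%N -> ~~ memn S h.-1.
  move=> h_gt0; have -> : h.-1 = (t - r)%N by lia.
  by rewrite -er; apply: runlen_stop; rewrite er; lia.
have [-> ->] : t.+1 = (h + r)%N /\ t = (h + r.-1)%N by lia.
rewrite (pre_addn runS) pre_addn => [|i hi]; last by apply: runS; lia.
have lang_pos k : (#|lang M k|%:R : R) \is Num.pos by rewrite posrE ltr0n card_lang_gt0.
rewrite !card_patterns_preU ?natrM ?lnM ?card_gt0 ?lang_pos //; try lia.
by rewrite /dlogL -!/(logL _); ring.
Qed.

Definition d2logL j : R := dlogL j - dlogL j.-1.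

Definition asc_summand i : R := \sum_(j < i.+1) d2logL j.+1 / 2 ^+ j.+1.

Lemma dlogL_telescope r : dlogL r = \sum_(j < r) d2logL j.+1.
Proof.
elim: r => [|r IH]; first by rewrite big_ord0 /dlogL subrr.
by rewrite big_ord_recr /= -IH /d2logL /= addrC subrK.
Qed.

Lemma sum_dlogL_runlen n i : (i < n)%N ->
  \sum_(S : {set 'I_n}) dlogL (runlen (memn S) i) =
  \sum_(j < i.+1) d2logL j.+1 * (2 ^ (n - j.+1))%:R.
Proof.
move=> ilt.
under eq_bigr => S _ do rewrite dlogL_telescope
  (big_ord_widen _ (fun j => d2logL j.+1) (runlen_le _ i)) big_mkcond.
rewrite exchange_big /=; apply: eq_bigr => j _.
rewrite -big_mkcond /= sumr_const mulr_natr; congr (_ *+ _).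
have ji : (j <= i)%N by have := ltn_ord j; lia.
transitivity #|[set S : {set 'I_n} | ival n (i - j) j.+1 \subset S]%SET|.
  by apply: eq_card => S; rewrite !inE /= -ltn_runlen_memn // -subn_eq0.
by rewrite card_supsets card_ord card_ival //; lia.
Qed.

Lemma asc_termE n : asc_term R M n = n%:R^-1 * \sum_(i < n) asc_summand i.
Proof.
rewrite /asc_term; congr (_ * _).
under eq_bigr => S _ do
  rewrite N_US_patterns -[in patterns S](pre_full S) (ln_card_patterns_pre S (leqnn n)).
rewrite -mulr_sumr exchange_big /= mulr_sumr; apply: eq_bigr => i _.
rewrite sum_dlogL_runlen // /asc_summand mulr_sumr; apply: eq_bigr => j _.
have jn : (j.+1 <= n)%N by have := ltn_ord j; have := ltn_ord i; lia.
have pow2n : (2 : R) ^+ n = 2 ^+ (n - j.+1) * 2 ^+ j.+1 by rewrite -exprD subnK.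
by rewrite natrX pow2n; field; rewrite !expf_neq0.
Qed.

Lemma logL0 : logL 0 = 0.
Proof. by rewrite /logL card_lang0 ln1. Qed.

Lemma rhs_term0 : rhs_term R M 0 = 0.
Proof. by rewrite /rhs_term -/(logL 0) logL0 mul0r. Qed.

Lemma asc_summandE i :
  asc_summand i = rhs_term R M i.+1 + 4^-1 * series (rhs_term R M) i.
Proof.
elim: i => [|i IH].
  rewrite /asc_summand big_ord1 seriesEord /= big_ord0 /d2logL /dlogL /rhs_term.
  by rewrite -!/(logL _) logL0 /=; ring.
rewrite /asc_summand big_ord_recr /= -/(asc_summand i) IH seriesSr.
rewrite /d2logL /dlogL /rhs_term -!/(logL _) /= !exprS; field.
by rewrite expf_neq0.
Qed.

Lemma rhs_term_ge0 k : 0 <= rhs_term R M k.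
Proof. by rewrite divr_ge0 ?exprn_ge0 // ln_ge0 // ler1n card_lang_gt0. Qed.

Lemma rhs_term_le k : rhs_term R M k <= k%:R / 2 ^+ k * ln m%:R.
Proof.
have m_gt0 : (0 < m)%N by case: a0 => i; lia.
rewrite mulrAC ler_wpM2r ?invr_ge0 ?exprn_ge0 //.
rewrite mulrC mulr_natr -lnXn ?ltr0n // -natrX.
rewrite ler_ln ?posrE ?ltr0n ?expn_gt0 ?m_gt0 ?card_lang_gt0 // ler_nat.
by apply: leq_trans (max_card _) _; rewrite card_tuple card_ord.
Qed.

Lemma series_rhs_term_le n : series (rhs_term R M) n <= 2 * ln m%:R.
Proof.
have lnm_ge0 : 0 <= ln (m%:R : R) by rewrite ln_ge0 // ler1n; case: a0 => i; lia.
rewrite seriesEord /=.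
apply: (@le_trans _ _ (\sum_(k < n) k%:R / 2 ^+ k * ln m%:R)).
  by apply: ler_sum => k _; exact: rhs_term_le.
rewrite -mulr_suml sum_n_div_2expn ler_wpM2r // lerBlDr lerDl.
by rewrite divr_ge0 ?mulr_ge0 ?exprn_ge0.
Qed.

Lemma is_cvg_series_rhs_term : cvgn (series (rhs_term R M)).
Proof.
apply: nondecreasing_is_cvgn.
  by rewrite seriesEnat; apply: nondecreasing_series => n _ _; exact: rhs_term_ge0.
by exists (2 * ln m%:R) => _ [n _ <-]; exact: series_rhs_term_le.
Qed.

Lemma asc_summand_cvg :
  asc_summand @ \oo --> 4^-1 * limn (series (rhs_term R M)).
Proof.
rewrite (_ : asc_summand = fun i => rhs_term R M i.+1 + 4^-1 * series (rhs_term R M) i);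
  last by apply/funext => i; rewrite asc_summandE.
rewrite -[X in _ --> X]add0r; apply: cvgD.
  by rewrite (cvg_shiftS (rhs_term R M)); exact: cvg_series_cvg_0 is_cvg_series_rhs_term.
by apply: cvgM; [exact: cvg_cst | exact: is_cvg_series_rhs_term].
Qed.

Lemma asc_cvg :
  cvgn ((fun n => \sum_(1 <= k < n) rhs_term R M k) : R^nat) /\
  asc_term R M @ \oo -->
    (1 / 4 : R) * \big[+%R/0%R]_(1 <= k <oo) rhs_term R M k.
Proof.
rewrite sum_from1_series ?rhs_term0 // div1r; split; first exact: is_cvg_series_rhs_term.
rewrite -cvg_shiftS (_ : (fun n => asc_term R M n.+1) = arithmetic_mean asc_summand).
  exact: cesaro asc_summand_cvg.
by apply/funext => n; rewrite asc_termE /arithmetic_mean seriesEord.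
Qed.

End ShiftOfFiniteType.

Lemma asc_cvg_empty_alphabet (R : realType) (M : 'M[nat]_0) :
  cvgn ((fun n => \sum_(1 <= k < n) rhs_term R M k) : R^nat) /\
  asc_term R M @ \oo -->
    (1 / 4 : R) * \big[+%R/0%R]_(1 <= k <oo) rhs_term R M k.
Proof.
have noX x : ~ SFT M x by case: (x 0).
have rhs0 k : rhs_term R M k = 0.
  rewrite /rhs_term (_ : #|lang M k| = 0%N) ?ln0 ?mul0r //.
  apply/eqP; rewrite cards_eq0; apply/eqP/finset.setP => w; rewrite !inE.
  by apply/negbTE/negP => /asboolP[x /noX].
have asc0 : asc_term R M = fun=> 0.
  apply/funext => n; rewrite /asc_term big1 ?mulr0 // => S _.
  rewrite (_ : N_US M S = 0%N) ?ln0 ?mulr0 //; apply/eqP; rewrite -leqn0 /N_US /Ncov.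
  apply: (@leq_trans #|(finset.set0 : {set {ffun 'I_n -> 'I_0}})|); last by rewrite cards0.
  by apply: (bigmin_le_cond _ (fun F : {set _} => #|F|)); apply/asboolP => y /noX.
have sums0 : (fun n => \sum_(1 <= k < n) rhs_term R M k) = fun=> 0.
  by apply/funext => n; rewrite big1.
rewrite asc0 sums0 lim_cst ?mulr0; last exact: norm_hausdorff.
by split; exact: cvg_cst.
Qed.

Unset Implicit Arguments.

Theorem theorem4p2 (R : realType) (m : nat) (M : 'M[nat]_m)
    (M01 : forall a b : 'I_m, M a b = 0%N \/ M a b = 1%N)
    (M2pos : forall a b : 'I_m, (0 < (M *m M) a b)%N) :
  cvgn ((fun n => \sum_(1 <= k < n) rhs_term R M k) : R^nat) /\
  asc_term R M @ \oo -->
    (1 / 4 : R) * \big[+%R/0%R]_(1 <= k <oo) rhs_term R M k.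
Proof.
case: m M M01 M2pos => [|m] M M01 M2pos; first exact: asc_cvg_empty_alphabet.
exact: (asc_cvg M01 M2pos ord0).
Qed.
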